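(* Let $\theta\in(0,\pi)$, $1\le k\le n-1$, $f$ a positive smooth function on $\mathcal{C}_\theta$, and $h$ a positive admissible solution of $$\frac{\sigma_n(\nabla^2h+h\sigma)}{\sigma_{n-k}(\nabla^2h+h\sigma)}=f^{-1}\ \text{in }\mathcal{C}_\theta,\qquad \nabla_\mu h=\cot\theta\, h\ \text{on }\partial\mathcal{C}_\theta.$$ Then $\max_{\mathcal{C}_\theta}|\nabla h|\le(1+\cot^2\theta)^{1/2}\|h\|_{C^0(\mathcal{C}_\theta)}$.
   Context: $e=-E_{n+1}$, $\mathcal{C}_\theta=\{\xi\in\overline{\mathbb{R}^{n+1}_+}: |\xi-\cos\theta\,e|=1\}$ with round metric $\sigma$, gradient $\nabla$, Hessian $\nabla^2$; $\mu$ is the outward unit co-normal of $\partial\mathcal{C}_\theta$. $\sigma_m(A)$ is the $m$-th elementary symmetric function of the eigenvalues of $A$ w.r.t. $\sigma$. $h$ is admissible if $\nabla^2h+h\sigma$ is positive definite. *)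

From HB Require Import structures.
From mathcomp Require Import all_boot all_order all_algebra.
From mathcomp Require Import all_classical all_reals all_analysis.
Set Implicit Arguments. Unset Strict Implicit. Unset Printing Implicit Defensive.
Import Order.TTheory GRing.Theory Num.Theory.
Import numFieldNormedType.Exports.
Local Open Scope classical_set_scope.
Local Open Scope ring_scope.

Section CapDefs.
Variable R : realType.
Variable n : nat.
Notation V := 'rV[R]_n.+1.

Definition dotv (u v : V) : R := (u *m v^T) 0 0.
Definition enorm (u : V) : R := Num.sqrt (dotv u u).

Definition Ebasis (i : 'I_n.+1) : V := delta_mx 0 i.
Definition evec : V := - Ebasis ord_max.

Definition capC (theta : R) : set V :=
  [set x : V | 0 <= x 0 ord_max /\ enorm (x - cos theta *: evec) = 1].
Definition bdryC (theta : R) : set V :=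
  [set x : V | x 0 ord_max = 0 /\ enorm (x - cos theta *: evec) = 1].

(* unit outward normal of the unit sphere centered at cos(theta) e *)
Definition nu (theta : R) (x : V) : V := x - cos theta *: evec.
Definition tproj (theta : R) (x : V) : 'M[R]_n.+1 :=
  1%:M - (nu theta x)^T *m nu theta x.

Definition Dgrad (h : V -> R) (x : V) : V := \row_i ('D_(Ebasis i) h x).
Definition Dhess (h : V -> R) (x : V) : 'M[R]_n.+1 :=
  \matrix_(i, j) ('D_(Ebasis j) ('D_(Ebasis i) h) x).

(* spherical gradient  \nabla h  (tangential part of the Euclidean gradient) *)
Definition sgrad (theta : R) (h : V -> R) (x : V) : V :=
  Dgrad h x *m tproj theta x.

(* matrix of the tensor  \nabla^2 h + h sigma  on the tangent space
   (extended by 0 in the normal direction): on the unit sphere,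
   \nabla^2 h(X,Y) = D^2 h(X,Y) - (Dh . nu) <X,Y> for tangent X, Y *)
Definition Amat (theta : R) (h : V -> R) (x : V) : 'M[R]_n.+1 :=
  tproj theta x *m
  (Dhess h x - (dotv (Dgrad h x) (nu theta x) - h x) *: 1%:M)
  *m tproj theta x.

(* m-th elementary symmetric function of the eigenvalues of a square matrix
   (via the characteristic polynomial) *)
Definition sigma_m (m : nat) (A : 'M[R]_n.+1) : R :=
  (-1) ^+ m * (char_poly A)`_(n.+1 - m).

(* outward unit co-normal of the boundary of the cap (tangent to the sphere,
   normal to the boundary, pointing out of the cap): normalized tangential
   projection of e = -E_{n+1} *)
Definition conormal (theta : R) (x : V) : V :=
  let w := evec *m tproj theta x in (enorm w)^-1 *: w.

Definition iterD (vs : seq V) (f : V -> R) : V -> R :=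
  foldr (fun v g => 'D_v g) f vs.
Definition smooth (f : V -> R) : Prop :=
  forall vs : seq V, continuous (iterD vs f) /\
    (forall (v x : V), derivable (iterD vs f) x v).

Definition admissible (theta : R) (h : V -> R) : Prop :=
  forall x, capC theta x -> forall X : V,
    dotv X (nu theta x) = 0 -> X != 0 -> 0 < dotv (X *m Amat theta h x) X.

Definition cot (theta : R) : R := cos theta / sin theta.
End CapDefs.

From Pilot Require Import Defs.
From HB Require Import structures.
From mathcomp Require Import all_boot all_order all_algebra.
From mathcomp Require Import all_classical all_reals all_analysis.
From mathcomp Require Import ring lra.
Import Order.TTheory GRing.Theory Num.Theory.
Import numFieldNormedType.Exports.
Local Open Scope classical_set_scope.
Local Open Scope ring_scope.

Set Implicit Arguments. Unset Strict Implicit. Unset Printing Implicit Defensive.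

(* The function P = |grad h|^2 + h^2, in ambient coordinates |Dh|^2 - (Dh.nu)^2 + h^2,
   attains its maximum on the compact cap at some point p.  Along a great circle through p
   with unit tangent X, the derivative of P at p is 2 (grad^2 h + h sigma)(grad h, X).
   At an interior maximum this vanishes for X = grad h / |grad h|, so admissibility forces
   grad h (p) = 0 and P(p) = h(p)^2.  At a boundary maximum, differentiating the Robin
   condition along the boundary sphere shows that (grad^2 h + h sigma)(mu, X) = 0 for X
   tangent to the boundary; hence the component of grad h tangent to the boundary is killed
   by admissibility, grad h (p) = (cot theta) h(p) mu, and P(p) = (1 + cot^2 theta) h(p)^2. *)

Section RealFunctions.
Variable R : realType.
Implicit Types (f g : R -> R) (t a b : R).

Lemma is_derive_add f g t a b : is_derive t (1 : R) f a -> is_derive t (1 : R) g b ->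
  is_derive t (1 : R) (fun s => f s + g s) (a + b).
Proof. exact: is_deriveD. Qed.

Lemma is_derive_sub f g t a b : is_derive t (1 : R) f a -> is_derive t (1 : R) g b ->
  is_derive t (1 : R) (fun s => f s - g s) (a - b).
Proof. exact: is_deriveB. Qed.

Lemma is_derive_mul f g t a b : is_derive t (1 : R) f a -> is_derive t (1 : R) g b ->
  is_derive t (1 : R) (fun s => f s * g s) (f t * b + g t * a).
Proof. exact: is_deriveM. Qed.

Lemma is_derive_const (c t : R) : is_derive t (1 : R) (fun=> c) 0.
Proof. exact: is_derive_cst. Qed.

Lemma is_derive_sumr m (F : 'I_m -> R -> R) (dF : 'I_m -> R) t :
  (forall i, is_derive t (1 : R) (F i) (dF i)) ->
  is_derive t (1 : R) (fun s => \sum_i F i s) (\sum_i dF i).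
Proof. by move=> hF; rewrite -fct_sumE; exact: is_derive_sum. Qed.

Lemma is_derive_local_max f (d : R) :
  (forall t, derivable f t 1) -> is_derive (0 : R) (1 : R) f d ->
  (\forall t \near 0, f t <= f 0) -> d = 0.
Proof.
move=> df f0 /nbhs_ballP[r /= r0 hr].
have : is_derive (0 : R) (1 : R) f 0.
  apply: (@derive1_at_max _ f (- r) r) => //.
  - by rewrite ge0_cp // ltW.
  - by rewrite in_itv /= oppr_lt0 r0.
  move=> t; rewrite in_itv /= => /andP[rt tr]; apply: hr.
  by rewrite -ball_normE /= sub0r normrN ltr_norml rt tr.
by move=> /@derive_val <-; rewrite derive_val.
Qed.

Lemma MVT_around0 f (df : R -> R) t :
  (forall s, is_derive s (1 : R) f (df s)) -> continuous f ->
  exists2 xi, `|xi| <= `|t| & f t - f 0 = df xi * t.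
Proof.
move=> dff cf.
have cf_on a b : {within `[a, b], continuous f} by exact: continuous_subspaceT.
case: (leP 0 t) => t0.
  have [xi /andP[xi0 xit] ->] := MVT_segment t0 (fun s _ => dff s) (cf_on 0 t).
  by exists xi; rewrite ?subr0 // !ger0_norm // (le_trans xi0).
have [xi] := MVT_segment (ltW t0) (fun s _ => dff s) (cf_on t 0).
rewrite in_itv /= => /andP[txi xi0] eq_f.
exists xi; first by rewrite !ler0_norm ?lerN2 // ltW.
by rewrite -opprB eq_f sub0r mulrN opprK.
Qed.

End RealFunctions.

Section Continuity.
Variables (T : topologicalType) (R : realType).
Implicit Types f g : T -> R.

Lemma continuous_add f g : continuous f -> continuous g -> continuous (fun y => f y + g y).
Proof. by move=> cf cg y; exact: (continuousD (cf y) (cg y)). Qed.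

Lemma continuous_sub f g : continuous f -> continuous g -> continuous (fun y => f y - g y).
Proof. by move=> cf cg y; exact: (continuousB (cf y) (cg y)). Qed.

Lemma continuous_mul f g : continuous f -> continuous g -> continuous (fun y => f y * g y).
Proof. by move=> cf cg y; exact: (continuousM (cf y) (cg y)). Qed.

Lemma continuous_sumr m (F : 'I_m -> T -> R) :
  (forall i, continuous (F i)) -> continuous (fun y => \sum_i F i y).
Proof.
move=> hF y; rewrite -fct_sumE.
by elim/big_ind: _ => [|f g cf cg|i _]; [exact: cst_continuous|exact: continuousD|exact: hF].
Qed.

End Continuity.

Section PartialDerivatives.
Variables (R : realType) (n : nat).
Local Notation V := 'rV[R]_n.+1.
Local Notation E := (@Ebasis R n).

Definition C1 (g : V -> R) : Prop :=
  [/\ continuous g, forall j, continuous ('D_(E j) g) & forall y j, derivable g y (E j)].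

Lemma smooth_derive (g : V -> R) (v : V) : smooth g -> smooth ('D_v g).
Proof. by move=> sg vs; have := sg (rcons vs v); rewrite /Defs.iterD foldr_rcons. Qed.

Lemma smooth_C1 (g : V -> R) : smooth g -> C1 g.
Proof.
move=> sg; split; first exact: (sg [::]).1.
  by move=> j; exact: (sg [:: E j]).1.
by move=> y j; exact: (sg [::]).2.
Qed.

Lemma normr_coord_le (v : V) j : `|v 0 j| <= `|v|.
Proof.
rewrite [leRHS]/Num.Def.normr /= mx_normrE; apply/bigmax_geP; right => /=.
by exists (0, j).
Qed.

Lemma normr_le_coord (v : V) e :
  0 <= e -> (forall j, `|v 0 j| <= e) -> `|v| <= e.
Proof.
move=> e0 hv; rewrite /Num.Def.normr /= mx_normrE.
by apply: bigmax_le => // -[i j] _ /=; rewrite (ord1 i); exact: hv.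
Qed.

Lemma is_derive_line (g : V -> R) (q e : V) (s : R) :
  derivable g (q + s *: e) e ->
  is_derive s (1 : R) (fun t => g (q + t *: e)) ('D_e g (q + s *: e)).
Proof.
move=> dg.
have quotE : (fun t : R => t^-1 *: (((fun t => g (q + t *: e)) \o shift s) (t *: 1)
              - g (q + s *: e)))
  = (fun t : R => t^-1 *: ((g \o shift (q + s *: e)) (t *: e) - g (q + s *: e))).
  by apply/funext => t /=; rewrite scaler1 scalerDl addrCA addrC.
by split; [rewrite /derivable quotE | rewrite /derive quotE].
Qed.

Lemma mvt_line (g : V -> R) (q e : V) (c eps t : R) :
  continuous g -> (forall y, derivable g y e) ->
  (forall s, `|s| <= `|t| -> `|'D_e g (q + s *: e) - c| <= eps) ->
  `|g (q + t *: e) - g q - t * c| <= eps * `|t|.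
Proof.
move=> cg dg hD.
pose phi s := g (q + s *: e) - s * c.
have dphi s : is_derive s (1 : R) phi ('D_e g (q + s *: e) - c).
  apply: is_derive_eq.
    exact: is_derive_sub (is_derive_line _) (is_derive_mul (is_derive_id s 1) (is_derive_const c s)).
  by rewrite /= mulr0 mulr1 add0r.
have cphi : continuous phi.
  apply: continuous_sub; last exact: scalel_continuous.
  move=> s; apply: (@continuous_comp _ _ _ (fun s : R => q + s *: e) g); last exact: cg.
  by apply: continuousD; [exact: cst_continuous | exact: scalel_continuous].
have [xi xit] := MVT_around0 t dphi cphi.
rewrite /phi scale0r addr0 mul0r subr0 addrAC => ->.
by rewrite normrM ler_pM // hD.
Qed.

(* Corners of the coordinatewise path from [0] to [v]. *)
Definition stair (v : V) (k : nat) : V := \row_j (if (j < k)%N then v 0 j else 0).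

Lemma stair0 (v : V) : stair v 0 = 0.
Proof. by apply/rowP => j; rewrite !mxE. Qed.

Lemma stair_full (v : V) : stair v n.+1 = v.
Proof. by apply/rowP => j; rewrite !mxE ltn_ord. Qed.

Lemma stairS (v : V) (k : 'I_n.+1) : stair v k.+1 = stair v k + v 0 k *: E k.
Proof.
apply/rowP => j; rewrite !mxE; case: (eqVneq j k) => [->|njk].
  by rewrite ltnSn ltnn eqxx add0r mulr1.
by rewrite mulr0 addr0 ltnS leq_eqVlt (inj_eq val_inj) (negPf njk).
Qed.

Lemma normr_stair_le (v : V) (k : 'I_n.+1) (s : R) :
  `|s| <= `|v 0 k| -> `|stair v k + s *: E k| <= `|v|.
Proof.
move=> sv; apply: normr_le_coord => // j; rewrite !mxE.
case: (eqVneq j k) => [->|njk].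
  by rewrite ltnn eqxx add0r mulr1 (le_trans sv (normr_coord_le _ _)).
rewrite mulr0 addr0; case: ifP => _; first exact: normr_coord_le.
by rewrite normr0.
Qed.

Definition is_velocity (gam : R -> V) (t : R) (w : V) : Prop :=
  forall j, is_derive t (1 : R) (fun s => gam s 0 j) (w 0 j).

Section C1Function.
Variable g : V -> R.
Hypothesis gC1 : C1 g.

Lemma C1_first_order (x : V) (eps : R) : 0 < eps -> exists2 d : R, 0 < d &
  forall v : V, `|v| < d ->
    `|g (x + v) - g x - \sum_j v 0 j * 'D_(E j) g x| <= eps * `|v|.
Proof.
case: gC1 => cg cDg dg eps0.
pose e := eps / n.+1%:R.
have e0 : 0 < e by rewrite divr_gt0 // ltr0n.
have : \forall y \near x, forall j, `|'D_(E j) g y - 'D_(E j) g x| <= e.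
  apply: (@filter_forall _ _ (fun j y => `|'D_(E j) g y - 'D_(E j) g x| <= e) (nbhs x) _) => j.
  have /cvgrPdist_le /(_ e e0) := cDg j x.
  by apply: filterS => y; rewrite distrC.
move=> /nbhs_ballP[d /= d0 near_x]; exists d => // v vd.
(* mean value theorem on each edge of the path [x + stair v k] *)
have step (k : 'I_n.+1) : `|g (x + stair v k.+1) - g (x + stair v k)
    - v 0 k * 'D_(E k) g x| <= e * `|v|.
  rewrite stairS addrA; apply: le_trans (mvt_line cg (dg^~ k) _) _.
  - move=> s sv; apply: near_x; rewrite -ball_normE /= -addrA opprD addNKr normrN.
    by rewrite (le_lt_trans _ vd) // normr_stair_le.
  by apply: ler_wpM2l; [exact: ltW | exact: normr_coord_le].
have -> : g (x + v) - g x - \sum_j v 0 j * 'D_(E j) g x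
    = \sum_(k < n.+1) (g (x + stair v k.+1) - g (x + stair v k)
                       - v 0 k * 'D_(E k) g x).
  rewrite sumrB -(big_mkord xpredT (fun k => g (x + stair v k.+1) - g (x + stair v k))).
  by rewrite telescope_sumr // stair_full stair0 addr0.
apply: le_trans (ler_norm_sum _ _ _) _.
apply: le_trans (ler_sum _ (fun k _ => step k)) _.
by rewrite sumr_const card_ord /e -mulrnAl -mulr_natr divfK // pnatr_eq0.
Qed.

Lemma differentiable_C1 (x : V) : differentiable g x.
Proof.
pose L (v : V) := \sum_j v 0 j * 'D_(E j) g x.
have L_linear : linear L.
  move=> a u v; rewrite /L scaler_sumr -big_split /=; apply: eq_bigr => j _.
  by rewrite !mxE mulrDl -mulrA.
pose LL : {linear V -> R} := HB.pack L (GRing.isLinear.Build _ _ _ _ L L_linear).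
have cL : continuous LL.
  apply: (@continuous_sumr _ _ _ (fun j (v : V) => v 0 j * 'D_(E j) g x)) => j.
  by apply: continuous_mul; [exact: coord_continuous | exact: cst_continuous].
suff g_o : g \o shift x = cst (g x) + (LL : V -> R) +o_ (0 : V) (@id V).
  by apply/diff_locallyP; rewrite (diff_unique cL g_o).
apply/eqaddoP => eps eps0.
have [d d0 hd] := C1_first_order x eps0.
apply/nbhs_ballP; exists d => // v; rewrite -ball_normE /= sub0r normrN => vd.
by rewrite /= !fctE /= [v + x]addrC opprD addrA; exact: hd.
Qed.

Lemma is_derive_C1_comp (gam : R -> V) (t : R) (w : V) : is_velocity gam t w ->
  is_derive t (1 : R) (g \o gam) (\sum_j 'D_(E j) g (gam t) * w 0 j).
Proof.
move=> dgam.
have gam_derivable : derivable gam t 1.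
  by apply/derivable_mxP => i j; rewrite (ord1 i); case: (dgam j).
have gam_diff : differentiable gam t by exact/derivable1_diffP.
have dgam_w : 'd gam t 1 = w.
  rewrite -deriveE // derive_mx //; apply/rowP => j; rewrite mxE.
  by case: (dgam j).
have gdiff := differentiable_C1 (gam t).
split; first exact/derivable1_diffP/differentiable_comp.
rewrite deriveE; last exact: differentiable_comp.
rewrite diff_comp // /= dgam_w {1}(row_sum_delta w) linear_sum.
apply: eq_bigr => j _.
by rewrite linearZ /= -deriveE // mulrC.
Qed.

End C1Function.
End PartialDerivatives.

Section InnerProduct.
Variables (R : realType) (n : nat).
Local Notation V := 'rV[R]_n.+1.
Implicit Types u v w : V.

Lemma dotvE u v : dotv u v = \sum_i u 0 i * v 0 i.
Proof. by rewrite /dotv !mxE; apply: eq_bigr => i _; rewrite mxE. Qed.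

Lemma dotvC u v : dotv u v = dotv v u.
Proof. by rewrite !dotvE; apply: eq_bigr => i _; rewrite mulrC. Qed.

Lemma dotvDl u v w : dotv (u + v) w = dotv u w + dotv v w.
Proof. by rewrite /dotv mulmxDl mxE. Qed.

Lemma dotvZl a u w : dotv (a *: u) w = a * dotv u w.
Proof. by rewrite /dotv -scalemxAl mxE. Qed.

Lemma dotvBl u v w : dotv (u - v) w = dotv u w - dotv v w.
Proof. by rewrite dotvDl -scaleN1r dotvZl mulN1r. Qed.

Lemma dotvDr u v w : dotv w (u + v) = dotv w u + dotv w v.
Proof. by rewrite dotvC dotvDl !(dotvC w). Qed.

Lemma dotvZr a u w : dotv w (a *: u) = a * dotv w u.
Proof. by rewrite dotvC dotvZl dotvC. Qed.

Lemma dotvBr u v w : dotv w (u - v) = dotv w u - dotv w v.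
Proof. by rewrite dotvC dotvBl !(dotvC w). Qed.

Lemma dotv0l w : dotv 0 w = 0.
Proof. by rewrite -(scale0r 0) dotvZl mul0r. Qed.

Lemma dotv_mulmx_tr u v (M : 'M[R]_n.+1) : dotv u (v *m M^T) = dotv (u *m M) v.
Proof. by rewrite /dotv trmx_mul trmxK mulmxA. Qed.

Lemma dotvv_ge0 u : 0 <= dotv u u.
Proof. by rewrite dotvE sumr_ge0 // => i _; rewrite -expr2 sqr_ge0. Qed.

Lemma dotvv_eq0 u : (dotv u u == 0) = (u == 0).
Proof.
apply/idP/eqP => [|->]; last by rewrite dotv0l.
rewrite dotvE psumr_eq0 => [/allP u0|i _]; last by rewrite -expr2 sqr_ge0.
apply/rowP => j; rewrite mxE; have /implyP := u0 j (mem_index_enum j).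
by rewrite -expr2 sqrf_eq0 => /(_ isT) /eqP.
Qed.

Lemma enorm_eq1 u : enorm u = 1 <-> dotv u u = 1.
Proof.
rewrite /enorm; split => [u1|->]; last exact: sqrtr1.
by rewrite -[dotv u u]sqr_sqrtr ?dotvv_ge0 // u1 expr1n.
Qed.

Lemma sqr_coord_le_dotv u j : u 0 j ^+ 2 <= dotv u u.
Proof.
rewrite dotvE (bigD1 j) //= -expr2 lerDl sumr_ge0 // => i _.
by rewrite -expr2 sqr_ge0.
Qed.

Lemma dotv_orthoD u v : dotv u v = 0 -> dotv (u + v) (u + v) = dotv u u + dotv v v.
Proof. by move=> uv; rewrite dotvDl !dotvDr uv (dotvC v) uv addr0 add0r. Qed.

Lemma exists_unit_multiple u : u != 0 -> exists2 k : R, 0 < k & dotv (k *: u) (k *: u) = 1.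
Proof.
move=> u0; have uu0 : 0 < dotv u u by rewrite lt_def dotvv_eq0 u0 dotvv_ge0.
exists (Num.sqrt (dotv u u))^-1; first by rewrite invr_gt0 sqrtr_gt0.
rewrite dotvZl dotvZr mulrA -expr2 exprVn sqr_sqrtr ?ltW // mulVf //.
by rewrite gt_eqF.
Qed.

Lemma continuous_dotv (T : topologicalType) (f g : T -> V) :
  (forall j, continuous (fun y => f y 0 j)) -> (forall j, continuous (fun y => g y 0 j)) ->
  continuous (fun y => dotv (f y) (g y)).
Proof.
move=> cf cg; under eq_fun do rewrite dotvE.
by apply: continuous_sumr => j; exact: continuous_mul.
Qed.

Lemma is_derive_dotv (a b : R -> V) (t : R) (da db : V) :
  is_velocity a t da -> is_velocity b t db ->
  is_derive t (1 : R) (fun s => dotv (a s) (b s)) (dotv (a t) db + dotv da (b t)).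
Proof.
move=> va vb.
have -> : (fun s => dotv (a s) (b s)) = fun s => \sum_i a s 0 i * b s 0 i.
  by apply/funext => s; rewrite dotvE.
apply: is_derive_eq (is_derive_sumr (fun j => is_derive_mul (va j) (vb j))) _.
by rewrite !dotvE -big_split; apply: eq_bigr => j _ /=; rewrite (mulrC (da 0 j)).
Qed.

End InnerProduct.

Section Cap.
Variables (R : realType) (n : nat) (theta : R) (h : 'rV[R]_n.+1 -> R).
Hypothesis smooth_h : smooth h.
Local Notation V := 'rV[R]_n.+1.
Local Notation E := (@Ebasis R n).
Local Notation co := (cos theta).
Local Notation nuv := (@nu R n theta).
Local Notation ev := (@evec R n).
Local Notation cap := (@capC R n theta).
Local Notation bdry := (@bdryC R n theta).
Implicit Types (u v w X y p c a b : V).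

Lemma evecE j : ev 0 j = - (j == ord_max)%:R.
Proof. by rewrite /evec /Ebasis !mxE eqxx. Qed.

Lemma dotv_evec u : dotv u ev = - u 0 ord_max.
Proof.
rewrite dotvE (bigD1 ord_max) //= big1 => [|j /negPf nj]; last by rewrite evecE nj oppr0 mulr0.
by rewrite evecE eqxx mulrN1 addr0.
Qed.

Lemma dotv_evecv : dotv ev ev = 1.
Proof. by rewrite dotv_evec evecE eqxx opprK. Qed.

Lemma cap_sphere y : cap y -> dotv (nuv y) (nuv y) = 1.
Proof. by case=> _ /enorm_eq1. Qed.

Lemma tprojE u y : u *m tproj theta y = u - dotv u (nuv y) *: nuv y.
Proof. by rewrite /tproj mulmxBr mulmx1 mulmxA [u *m _^T]mx11_scalar mul_scalar_mx. Qed.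

Lemma tproj_tr y : (tproj theta y)^T = tproj theta y.
Proof. by rewrite /tproj linearB /= trmx1 trmx_mul trmxK. Qed.

Definition normal_deriv y : R := dotv (Dgrad h y) (nuv y).

Lemma sgradE y : sgrad theta h y = Dgrad h y - normal_deriv y *: nuv y.
Proof. exact: tprojE. Qed.

Lemma sgrad_tangent y : dotv (nuv y) (nuv y) = 1 -> dotv (sgrad theta h y) (nuv y) = 0.
Proof. by move=> nu1; rewrite sgradE dotvBl dotvZl nu1 mulr1 subrr. Qed.

Lemma dotv_sgrad y X : dotv X (nuv y) = 0 -> dotv (Dgrad h y) X = dotv (sgrad theta h y) X.
Proof. by move=> Xnu; rewrite sgradE dotvBl dotvZl (dotvC (nuv y)) Xnu mulr0 subr0. Qed.

Definition hess_form y u w : R := dotv (u *m Dhess h y) w.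

Definition adm_form y u w : R :=
  hess_form y u w - (normal_deriv y - h y) * dotv u w.

Lemma adm_formDl y u v w : adm_form y (u + v) w = adm_form y u w + adm_form y v w.
Proof. by rewrite /adm_form /hess_form mulmxDl !dotvDl; ring. Qed.

Lemma adm_formZl y (k : R) u w : adm_form y (k *: u) w = k * adm_form y u w.
Proof. by rewrite /adm_form /hess_form -scalemxAl !dotvZl; ring. Qed.

Lemma adm_formZr y (k : R) u w : adm_form y u (k *: w) = k * adm_form y u w.
Proof. by rewrite /adm_form /hess_form !dotvZr; ring. Qed.

Lemma Amat_tangent y X : dotv X (nuv y) = 0 ->
  dotv (X *m Amat theta h y) X = adm_form y X X.
Proof.
move=> Xnu; have PX : X *m tproj theta y = X by rewrite tprojE Xnu scale0r subr0.
have PXT : tproj theta y *m X^T = X^T.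
  by rewrite -[in RHS]PX trmx_mul tproj_tr.
rewrite /dotv /Amat !mulmxA PX -(mulmxA _ (tproj theta y)) PXT -/(dotv _ X).
by rewrite mulmxBr -scalemxAr mulmx1 dotvBl dotvZl.
Qed.

Lemma admissible_tangent_eq0 y u : admissible theta h -> cap y ->
  dotv u (nuv y) = 0 -> adm_form y u u = 0 -> u = 0.
Proof.
move=> adm_h cy unu uu0; apply/eqP; apply: contraT => u0.
by have := adm_h y cy u unu u0; rewrite Amat_tangent // uu0 ltxx.
Qed.

Let h_C1 : C1 h := smooth_C1 smooth_h.
Let Dh_C1 i : C1 ('D_(E i) h) := smooth_C1 (smooth_derive (E i) smooth_h).

Definition energy y : R :=
  dotv (Dgrad h y) (Dgrad h y) - normal_deriv y ^+ 2 + h y ^+ 2.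

Lemma energyE y : dotv (nuv y) (nuv y) = 1 ->
  energy y = dotv (sgrad theta h y) (sgrad theta h y) + h y ^+ 2.
Proof.
move=> nu1; rewrite /energy sgradE !dotvBl !dotvBr !dotvZl !dotvZr nu1.
by rewrite (dotvC (nuv y)) -/(normal_deriv y); ring.
Qed.

Lemma continuous_nu_coord j : continuous (fun y => nuv y 0 j).
Proof.
have -> : (fun y => nuv y 0 j) = fun y => y 0 j - co * ev 0 j.
  by apply/funext => y; rewrite !mxE.
by apply: continuous_sub; [exact: coord_continuous | exact: cst_continuous].
Qed.

Lemma continuous_energy : continuous energy.
Proof.
case: h_C1 => ch cDh _.
have cG j : continuous (fun y => Dgrad h y 0 j).
  by have -> : (fun y => Dgrad h y 0 j) = 'D_(E j) h by apply/funext => y; rewrite mxE.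
have cGN : continuous normal_deriv by apply: continuous_dotv => // j; exact: continuous_nu_coord.
apply: continuous_add; last exact: continuous_mul.
by apply: continuous_sub; [exact: continuous_dotv | exact: continuous_mul].
Qed.

Lemma is_velocity_nu gam t w : is_velocity gam t w -> is_velocity (nuv \o gam) t w.
Proof.
move=> vg j; have -> : (fun s => (nuv \o gam) s 0 j) = fun s => gam s 0 j - co * ev 0 j.
  by apply/funext => s; rewrite !mxE.
by rewrite -[w 0 j]subr0; exact: is_derive_sub (vg j) (is_derive_const _ t).
Qed.

Lemma is_velocity_Dgrad gam t w : is_velocity gam t w ->
  is_velocity (Dgrad h \o gam) t (w *m (Dhess h (gam t))^T).
Proof.
move=> vg i; have -> : (fun s => (Dgrad h \o gam) s 0 i) = 'D_(E i) h \o gam.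
  by apply/funext => s; rewrite mxE.
apply: is_derive_eq (is_derive_C1_comp (Dh_C1 i) vg) _.
by rewrite mxE; apply: eq_bigr => j _; rewrite !mxE mulrC.
Qed.

Lemma is_derive_h_comp gam t w : is_velocity gam t w ->
  is_derive t (1 : R) (h \o gam) (dotv (Dgrad h (gam t)) w).
Proof.
move=> vg; apply: is_derive_eq (is_derive_C1_comp h_C1 vg) _.
by rewrite dotvE; apply: eq_bigr => j _; rewrite mxE.
Qed.

Lemma is_derive_energy gam t w : is_velocity gam t w ->
  is_derive t (1 : R) (energy \o gam) (2 * (hess_form (gam t) (sgrad theta h (gam t)) w
    - (normal_deriv (gam t) - h (gam t)) * dotv (Dgrad h (gam t)) w)).
Proof.
move=> vg; have dG := is_velocity_Dgrad vg; have dN := is_velocity_nu vg.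
have dh := is_derive_h_comp vg.
have dGN := is_derive_dotv dG dN.
apply: is_derive_eq.
  exact: is_derive_add (is_derive_sub (is_derive_dotv dG dG) (is_derive_mul dGN dGN))
                       (is_derive_mul dh dh).
rewrite /= sgradE /hess_form mulmxBl -scalemxAl dotvBl dotvZl -/(normal_deriv (gam t)).
rewrite !(dotvC (w *m _)) !dotv_mulmx_tr.
ring.
Qed.

Lemma compact_cap : compact cap.
Proof.
have -> : cap = [set y : V | 0 <= y 0 ord_max] `&` [set y | dotv (nuv y) (nuv y) = 1].
  by apply/seteqP; split => y [y0 hy]; split => //; apply/enorm_eq1.
apply: bounded_closed_compact.
  exists 2; split => // M M2 y [_ nu1] /=.
  apply: le_trans (ltW M2); apply: normr_le_coord => // j.
  have -> : y 0 j = nuv y 0 j + co * ev 0 j by rewrite !mxE subrK.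
  apply: le_trans (ler_normD _ _) _; rewrite -[2]/(1 + 1) lerD //.
    have := sqr_coord_le_dotv (nuv y) j; rewrite nu1 => nu_j.
    by rewrite ler_norml; apply/andP; split; nra.
  rewrite normrM evecE normrN; case: (j == ord_max); last by rewrite normr0 mulr0.
  by rewrite normr1 mulr1 ler_norml cos_le1 cos_geN1.
apply: closedI.
  exact: (continuous_closedP _).1 (@coord_continuous _ _ _ _ _) _ (@closed_ge R 0).
have := continuous_dotv continuous_nu_coord continuous_nu_coord.
by move=> /continuous_closedP /(_ _ (@closed_eq R 1)).
Qed.

Definition conormal_dir y : V := ev + co *: nuv y.

Lemma dotv_evec_nu y : dotv ev (nuv y) = - y 0 ord_max - co.
Proof. by rewrite dotvC dotv_evec /nu !mxE !eqxx /= mulrN1 opprK opprD. Qed.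

Lemma bdry_conormal_dir y : bdry y -> [/\ ev *m tproj theta y = conormal_dir y,
  dotv (conormal_dir y) (nuv y) = 0 & dotv (conormal_dir y) (conormal_dir y) = sin theta ^+ 2].
Proof.
case=> y0 /enorm_eq1 nu1.
have ev_nu : dotv ev (nuv y) = - co by rewrite dotv_evec_nu y0 oppr0 sub0r.
have cd_nu : dotv (conormal_dir y) (nuv y) = 0 by rewrite dotvDl dotvZl ev_nu nu1 mulr1 addNr.
split => //; first by rewrite tprojE ev_nu scaleNr opprK.
rewrite {2}/conormal_dir dotvDr dotvZr cd_nu mulr0 addr0 dotvDl dotvZl dotv_evecv.
by rewrite dotvC ev_nu -(cos2Dsin2 theta); ring.
Qed.

Lemma bc_conormal_dir y : 0 < sin theta -> bdry y ->
  dotv (conormal theta y) (sgrad theta h y) = cot theta * h y ->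
  dotv (conormal_dir y) (Dgrad h y) = co * h y.
Proof.
move=> st0 by_y; have [ev_tproj cd_nu cd_cd] := bdry_conormal_dir by_y.
have norm_cd : enorm (conormal_dir y) = sin theta.
  by rewrite /enorm cd_cd sqrtr_sqr ger0_norm // ltW.
rewrite /conormal ev_tproj norm_cd dotvZl dotvC -dotv_sgrad; last by [].
rewrite dotvC /cot => /(congr1 ( *%R (sin theta))).
by rewrite mulrA mulfV ?gt_eqF // mul1r => ->; field; rewrite gt_eqF.
Qed.

Lemma is_derive_bc gam t w : is_velocity gam t w ->
  is_derive t (1 : R) (fun s => dotv (conormal_dir (gam s)) (Dgrad h (gam s)) - co * h (gam s))
    (hess_form (gam t) (conormal_dir (gam t)) w).
Proof.
move=> vg; have dG := is_velocity_Dgrad vg; have dN := is_velocity_nu vg.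
have dM : is_velocity (conormal_dir \o gam) t (co *: w).
  move=> j; have -> : (fun s => (conormal_dir \o gam) s 0 j)
      = fun s => ev 0 j + co * (nuv \o gam) s 0 j by apply/funext => s; rewrite !mxE.
  apply: is_derive_eq.
    exact: is_derive_add (is_derive_const _ t) (is_derive_mul (is_derive_const co t) (dN j)).
  by rewrite !mxE; ring.
apply: is_derive_eq.
  exact: is_derive_sub (is_derive_dotv dM dG) (is_derive_mul (is_derive_const co t) (is_derive_h_comp vg)).
by rewrite /= /hess_form dotv_mulmx_tr dotvZl (dotvC w); ring.
Qed.

Definition circle (c a b : V) (s : R) : V := c + cos s *: a + sin s *: b.

Lemma circle0 c a b : circle c a b 0 = c + a.
Proof. by rewrite /circle cos0 sin0 scale1r scale0r addr0. Qed.

Lemma is_velocity_circle c a b t : is_velocity (circle c a b) t (- sin t *: a + cos t *: b).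
Proof.
move=> j; have -> : (fun s => circle c a b s 0 j) = fun s => c 0 j + cos s * a 0 j + sin s * b 0 j.
  by apply/funext => s; rewrite !mxE.
have dcos := is_derive_mul (is_derive_cos t) (is_derive_const (a 0 j) t).
have dsin := is_derive_mul (is_derive_sin t) (is_derive_const (b 0 j) t).
apply: is_derive_eq (is_derive_add (is_derive_add (is_derive_const (c 0 j) t) dcos) dsin) _.
by rewrite !mxE; ring.
Qed.

Lemma dotv_circle c a b s : dotv a a = dotv b b -> dotv a b = 0 ->
  dotv (circle c a b s - c) (circle c a b s - c) = dotv a a.
Proof.
move=> ab ab0; rewrite /circle -[c + _ + _]addrA addrAC subrr add0r dotv_orthoD; last by rewrite dotvZl dotvZr ab0 !mulr0.
by rewrite !dotvZl !dotvZr -ab !mulrA -mulrDl -!expr2 cos2Dsin2 mul1r.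
Qed.

Lemma near_circle_gt0 c a b j : 0 < (c + a) 0 j -> \forall s \near (0 : R), 0 < circle c a b s 0 j.
Proof.
move=> ca0; have c_coord : continuous (fun s => circle c a b s 0 j).
  have -> : (fun s => circle c a b s 0 j) = fun s => c 0 j + cos s * a 0 j + sin s * b 0 j.
    by apply/funext => s; rewrite !mxE.
  apply: continuous_add; last by apply: continuous_mul; [exact: continuous_sin | exact: cst_continuous].
  apply: continuous_add; first exact: cst_continuous.
  by apply: continuous_mul; [exact: continuous_cos | exact: cst_continuous].
by apply: (cvgr_gt _ (c_coord 0)); rewrite /= circle0.
Qed.

Lemma energy_max_crit (C : set V) p c a b :
  (forall y, C y -> energy y <= energy p) -> (\forall s \near (0 : R), C (circle c a b s)) ->
  c + a = p -> dotv b (nuv p) = 0 -> adm_form p (sgrad theta h p) b = 0.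
Proof.
move=> pmax near_C ca_p bnu.
have d s := is_derive_energy (is_velocity_circle c a b s).
have dphi s : derivable (energy \o circle c a b) s 1 by case: (d s).
have d0 := d 0; rewrite circle0 ca_p sin0 cos0 oppr0 scale0r add0r scale1r in d0.
have near_max : \forall s \near (0 : R), (energy \o circle c a b) s <= (energy \o circle c a b) 0.
  by apply: filterS near_C => s Cs; rewrite /= circle0 ca_p; exact: pmax.
move: (is_derive_local_max dphi d0 near_max) => /eqP.
by rewrite mulf_eq0 pnatr_eq0 /= dotv_sgrad // => /eqP.
Qed.

Lemma bc_crit p c a b :
  (forall y, bdry y -> dotv (conormal_dir y) (Dgrad h y) = co * h y) ->
  (forall s, bdry (circle c a b s)) -> c + a = p -> hess_form p (conormal_dir p) b = 0.
Proof.
move=> bc on_bdry ca_p.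
have := is_derive_bc (is_velocity_circle c a b 0).
rewrite circle0 ca_p sin0 cos0 oppr0 scale0r add0r scale1r.
have -> : (fun s => dotv (conormal_dir (circle c a b s)) (Dgrad h (circle c a b s))
    - co * h (circle c a b s)) = cst 0.
  by apply/funext => s; rewrite bc ?subrr.
by move=> /@derive_val <-; rewrite derive_cst.
Qed.

Lemma nu_center p : co *: ev + nuv p = p.
Proof. by rewrite /nu addrC subrK. Qed.

Lemma interior_max p : admissible theta h -> cap p -> 0 < p 0 ord_max ->
  (forall y, cap y -> energy y <= energy p) -> sgrad theta h p = 0.
Proof.
move=> adm_h cap_p p_pos pmax; set g := sgrad theta h p.
have nu1 := cap_sphere cap_p; have g_nu : dotv g (nuv p) = 0 := sgrad_tangent nu1.
case: (eqVneq g 0) => // g0.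
have [k k0 X1] := exists_unit_multiple g0.
have X_nu : dotv (k *: g) (nuv p) = 0 by rewrite dotvZl g_nu mulr0.
have near_cap : \forall s \near (0 : R), cap (circle (co *: ev) (nuv p) (k *: g) s).
  have p_pos' : 0 < (co *: ev + nuv p) 0 ord_max by rewrite nu_center.
  apply: filterS (near_circle_gt0 (k *: g) p_pos') => s s_pos; split; first exact: ltW.
  by apply/enorm_eq1; rewrite dotv_circle ?nu1 // dotvC.
have := energy_max_crit pmax near_cap (nu_center p) X_nu.
rewrite adm_formZr => /eqP; rewrite mulf_eq0 gt_eqF //= => /eqP gg0.
by move: g0; rewrite (admissible_tangent_eq0 adm_h cap_p g_nu gg0) eqxx.
Qed.

Lemma boundary_crit p X : 0 < sin theta -> bdry p ->
  (forall y, cap y -> energy y <= energy p) ->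
  (forall y, bdry y -> dotv (conormal_dir y) (Dgrad h y) = co * h y) ->
  dotv X X = 1 -> dotv X ev = 0 -> dotv X p = 0 ->
  adm_form p (sgrad theta h p) X = 0 /\ hess_form p (conormal_dir p) X = 0.
Proof.
move=> st0 [p0 /enorm_eq1 nu1] pmax bc X1 Xev Xp.
have p_ev : dotv p ev = 0 by rewrite dotv_evec p0 oppr0.
have pp : dotv p p = sin theta ^+ 2.
  move: nu1; rewrite /nu !dotvBl !dotvBr !dotvZl !dotvZr p_ev (dotvC ev) p_ev dotv_evecv.
  by have := cos2Dsin2 theta; lra.
have X_nu : dotv (sin theta *: X) (nuv p) = 0.
  by rewrite dotvZl /nu dotvBr dotvZr Xp Xev mulr0 subrr mulr0.
have on_bdry s : bdry (circle 0 p (sin theta *: X) s).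
  have last0 : circle 0 p (sin theta *: X) s 0 ord_max = 0.
    by move: Xev; rewrite !mxE p0 dotv_evec => /eqP; rewrite oppr_eq0 => /eqP ->; ring.
  split => //; apply/enorm_eq1; rewrite dotv_orthoD; last first.
    by rewrite -scaleNr dotvZr dotv_evec last0 oppr0 mulr0.
  rewrite -[circle _ _ _ s]subr0 dotv_circle ?pp; last 2 first.
  - by rewrite dotvZl dotvZr X1 mulr1 expr2.
  - by rewrite dotvZr dotvC Xp mulr0.
  by rewrite -scaleNr dotvZl dotvZr dotv_evecv mulr1 mulrNN -expr2 addrC cos2Dsin2.
have cancel_pos (k x : R) : 0 < k -> k * x = 0 -> x = 0.
  by move=> k0 /eqP; rewrite mulf_eq0 gt_eqF //= => /eqP.
split.
  apply: (cancel_pos _ _ st0); rewrite -adm_formZr.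
  apply: energy_max_crit pmax _ (add0r p) X_nu.
  apply/nbhs_ballP; exists 1 => [|s _]; first exact: ltr01.
  by case: (on_bdry s) => s0 ?; split; rewrite ?s0.
apply: (cancel_pos _ _ st0); rewrite /hess_form -dotvZr.
exact: bc_crit bc on_bdry (add0r p).
Qed.

Lemma boundary_max p : 0 < sin theta -> admissible theta h -> bdry p ->
  (forall y, cap y -> energy y <= energy p) ->
  (forall y, bdry y -> dotv (conormal_dir y) (Dgrad h y) = co * h y) ->
  energy p = (1 + cot theta ^+ 2) * h p ^+ 2.
Proof.
move=> st0 adm_h bdry_p pmax bc.
have cap_p : cap p by case: bdry_p => p0 ?; split; rewrite ?p0.
have nu1 := cap_sphere cap_p; have [_ m_nu m_m] := bdry_conormal_dir bdry_p.
set m := conormal_dir p; set g := sgrad theta h p.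
have st2 : sin theta ^+ 2 != 0 by rewrite sqrf_eq0 gt_eqF.
have g_nu : dotv g (nuv p) = 0 := sgrad_tangent nu1.
have g_m : dotv g m = co * h p by rewrite -(bc _ bdry_p) [RHS]dotvC dotv_sgrad.
(* [gT] is the component of [g] tangent to the boundary sphere. *)
set al := dotv g m / sin theta ^+ 2; set gT := g - al *: m.
have gT_m : dotv gT m = 0 by rewrite dotvBl dotvZl m_m /al divfK // subrr.
have gT_nu : dotv gT (nuv p) = 0 by rewrite dotvBl dotvZl m_nu g_nu mulr0 subrr.
have gT_ev : dotv gT ev = 0.
  by move: gT_m; rewrite /m /conormal_dir dotvDr dotvZr gT_nu mulr0 addr0.
have gT_p : dotv gT p = 0 by rewrite -(nu_center p) dotvDr dotvZr gT_ev gT_nu mulr0 addr0.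
have gT0 : gT = 0.
  case: (eqVneq gT 0) => // gT_neq0.
  have [k k0 X1] := exists_unit_multiple gT_neq0.
  have X_ev : dotv (k *: gT) ev = 0 by rewrite dotvZl gT_ev mulr0.
  have X_p : dotv (k *: gT) p = 0 by rewrite dotvZl gT_p mulr0.
  have [] := boundary_crit st0 bdry_p pmax bc X1 X_ev X_p; rewrite -/g -/m => crit_g crit_m.
  apply: (admissible_tangent_eq0 adm_h cap_p gT_nu).
  have : adm_form p gT (k *: gT) = 0.
    rewrite {1}/gT -scaleNr adm_formDl adm_formZl crit_g /adm_form crit_m.
    by rewrite dotvZr (dotvC m) gT_m !mulr0 subr0 mulr0 add0r.
  by rewrite adm_formZr => /eqP; rewrite mulf_eq0 gt_eqF //= => /eqP.
have g_al : g = al *: m by apply/eqP; rewrite -subr_eq0 -/gT gT0.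
rewrite energyE // -/g g_al dotvZl dotvZr m_m /al g_m /cot.
by field; rewrite gt_eqF.
Qed.

Lemma energy_max_bound x : 0 < sin theta -> admissible theta h -> cap x ->
  (forall y, bdry y -> dotv (conormal_dir y) (Dgrad h y) = co * h y) ->
  exists2 p, cap p & forall y, cap y -> energy y <= (1 + cot theta ^+ 2) * h p ^+ 2.
Proof.
move=> st0 adm_h cap_x bc.
have [p] := EVT_max_rV (ex_intro _ x cap_x) compact_cap (continuous_subspaceT continuous_energy).
rewrite inE => cap_p pmax'.
have pmax y : cap y -> energy y <= energy p by move=> cy; apply: pmax'; rewrite inE.
exists p => // y /pmax /le_trans; apply.
have [p_pos|p0] : 0 < p 0 ord_max \/ p 0 ord_max = 0.
  by case: cap_p => + _; rewrite le_eqVlt => /orP[/eqP <-|]; [right | left].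
  rewrite energyE ?(cap_sphere cap_p) // (interior_max adm_h cap_p p_pos pmax) dotv0l add0r.
  by rewrite ler_peMl ?sqr_ge0 // lerDl sqr_ge0.
have bdry_p : bdry p by case: cap_p.
by rewrite (boundary_max st0 adm_h bdry_p pmax bc).
Qed.

End Cap.

Lemma le_sup_image (T : Type) (R : realType) (A : set T) (f : T -> R) (M : R) y :
  A y -> (forall z, A z -> f z <= M) -> f y <= sup [set f z | z in A].
Proof.
move=> Ay fM; apply: sup_upper_bound; last by exists y.
by split; [exists (f y), y | exists M => _ [z Az <-]; exact: fM].
Qed.

Unset Implicit Arguments.

Theorem lemma3p3 (R : realType) (n k : nat) (theta : R)
  (f h : 'rV[R]_n.+1 -> R) :
  0 < theta < pi ->
  (1 <= k)%N -> (k <= n - 1)%N ->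
  smooth f -> (forall x, @capC R n theta x -> 0 < f x) ->
  smooth h -> (forall x, @capC R n theta x -> 0 < h x) ->
  admissible theta h ->
  (forall x, @capC R n theta x ->
     sigma_m n (Amat theta h x) / sigma_m (n - k) (Amat theta h x) = (f x)^-1) ->
  (forall x, @bdryC R n theta x ->
     dotv (conormal theta x) (sgrad theta h x) = cot theta * h x) ->
  forall x, @capC R n theta x ->
    enorm (sgrad theta h x) <=
      Num.sqrt (1 + cot theta ^+ 2) * sup [set `|h y| | y in @capC R n theta].
Proof.
move=> theta_pi _ _ _ _ smooth_h _ adm_h _ bc x cap_x.
have st0 : 0 < sin theta by exact: sin_gt0_pi.
have bc' y : bdryC theta y -> dotv (conormal_dir theta y) (Dgrad h y) = cos theta * h y.
  by move=> bdry_y; apply: bc_conormal_dir => //; exact: bc.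
have [p cap_p energy_le] := energy_max_bound smooth_h st0 adm_h cap_x bc'.
set M := (1 + cot theta ^+ 2) * h p ^+ 2.
have grad_le y : capC theta y -> dotv (sgrad theta h y) (sgrad theta h y) + h y ^+ 2 <= M.
  by move=> cap_y; rewrite -energyE ?cap_sphere //; exact: energy_le.
have h_le y : capC theta y -> `|h y| <= Num.sqrt M.
  move=> cap_y; rewrite -sqrtr_sqr; apply: ler_wsqrtr.
  by apply: le_trans (grad_le y cap_y); rewrite lerDr dotvv_ge0.
apply: (@le_trans _ _ (Num.sqrt M)).
  by apply: ler_wsqrtr; apply: le_trans (grad_le x cap_x); rewrite lerDl sqr_ge0.
rewrite /M sqrtrM ?addr_ge0 ?sqr_ge0 // sqrtr_sqr ler_wpM2l ?sqrtr_ge0 //.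
exact: le_sup_image cap_p h_le.
Qed.
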